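(* In the setting of the context, $N$ is isomorphic to the permutation module $k[U_3/H_2]$, and its socle is spanned by $d_1^2=x^2$. Also, $K$ is isomorphic to the permutation module $k[U_3/H_1]$, and its socle is spanned by $d_2=y^2+xy$.
   Context: Let $k=\mathbb{F}_2$ and let $U_3\cong D_8$ be the group of upper unitriangular $3\times 3$ matrices over $\mathbb{F}_2$. The group $U_3$ acts on the polynomial ring $k[x,y,z]$ by graded algebra automorphisms. Its action on the degree-one part $M=\langle x,y,z\rangle$ is the natural module, and it preserves the flag $\langle x\rangle\subset\langle x,y\rangle\subset\langle x,y,z\rangle$. Let $b,c,d\in U_3$ be the elements defined as follows: - $b$ sends $y\mapsto y+x$ and fixes $x,z$; - $c$ sends $z\mapsto z+x$ and fixes $x,y$; - $d$ sends $z\mapsto z+y$ and fixes $x,y$. Let $H_1=\langle b,c\rangle$ and $H_2=\langle d\rangle$. Put $d_1=x$ and $d_2=y^2+xy$. Let $N$ be the $kU_3$-submodule of $k[x,y,z]$ generated by $\phi=z^2+yz$, and let $K$ be the $kU_3$-submodule generated by $\theta=z^2+xz$. *)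

From HB Require Import structures.
From mathcomp Require Import all_boot all_order all_algebra all_fingroup.
From mathcomp Require Import mpoly.
Set Implicit Arguments. Unset Strict Implicit. Unset Printing Implicit Defensive.
Import GRing.Theory.
Local Open Scope ring_scope.

Notation F2 := 'F_2.
Notation Poly3 := {mpoly F2[3]}.
Definition xx : Poly3 := 'X_0.
Definition yy : Poly3 := 'X_1.
Definition zz : Poly3 := 'X_2.

(* The ambient finite group: GL_3(F_2). A matrix g acts on M = <x,y,z> with
   column convention: the j-th variable is sent to \sum_i g i j X_i. *)
Notation GL3 := {'GL_3[F2]}.

Definition upper_unitriangular (M : 'M[F2]_3) : bool :=
  [forall i : 'I_3, M i i == 1] && [forall i : 'I_3, forall j : 'I_3, (j < i)%N ==> (M i j == 0)].

Definition U3 : {set GL3} := [set g : GL3 | upper_unitriangular (GLval g)].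

Lemma unit_1_delta (i j : 'I_3) : (i < j)%N -> (1%:M + delta_mx i j : 'M[F2]_3) \in unitmx.
Proof.
move=> lt_ij; rewrite unitmxE -det_tr det_trig.
  rewrite big1 ?unitr1 // => k _.
  rewrite !mxE eqxx /=.
  have -> : (k == i) && (k == j) = false.
    by apply/negbTE/negP => /andP[/eqP ki /eqP kj]; move: lt_ij; rewrite -ki -kj ltnn.
  by rewrite addr0.
apply/is_trig_mxP => r s lt_rs; rewrite !mxE.
have -> : (s == r) = false by apply/negbTE; rewrite neq_ltn lt_rs orbT.
have -> : (s == i) && (r == j) = false.
  by apply/negbTE/negP => /andP[/eqP esi /eqP erj]; by move: lt_ij; rewrite -esi -erj ltnNge (ltnW lt_rs).
by rewrite addr0.
Qed.

Definition mkGL (i j : 'I_3) (h : (i < j)%N) : GL3 := FinRing.unit _ (unit_1_delta h).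

(* b : y |-> y + x ; c : z |-> z + x ; d : z |-> z + y *)
Definition b : GL3 := @mkGL 0 1 erefl.
Definition c : GL3 := @mkGL 0 2 erefl.
Definition d : GL3 := @mkGL 1 2 erefl.

Definition H1 : {group GL3} := <<[set b; c]>>%G.
Definition H2 : {group GL3} := <[d]>%G.

Definition polyact (g : GL3) (p : Poly3) : Poly3 :=
  comp_mpoly [tuple \sum_(i < 3) (GLval g i j) *: ('X_i : Poly3) | j < 3] p.

Definition d1 : Poly3 := xx.
Definition d2 : Poly3 := yy ^+ 2 + xx * yy.
Definition phi : Poly3 := zz ^+ 2 + yy * zz.
Definition theta : Poly3 := zz ^+ 2 + xx * zz.

Definition gen_submod (p : Poly3) : Poly3 -> Prop :=
  fun q => exists cf : {ffun GL3 -> F2}, q = \sum_(g in U3) cf g *: polyact g p.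

Definition N : Poly3 -> Prop := gen_submod phi.
Definition K : Poly3 -> Prop := gen_submod theta.

(* The permutation module k[U_3/H]: formal F_2-linear combinations of the left
   cosets gH (g in U_3), i.e. functions on the set of left cosets, with
   g . (delta_{xH}) = delta_{gxH}. *)
Notation PermV := {ffun {set GL3} -> F2^o}.
Definition perm_mod (H : {set GL3}) : PermV -> Prop :=
  fun f => forall C, C \notin lcosets H U3 -> f C = 0.
Definition pact (g : GL3) (f : PermV) : PermV := [ffun C => f (g^-1 *: C)%g].

Section Modules.
Variables (G : {set GL3}) (V : lmodType F2) (actV : GL3 -> V -> V).

Definition is_submod (A S : V -> Prop) : Prop :=
  [/\ forall v, S v -> A v, S 0,
      forall u v, S u -> S v -> S (u + v),
      forall (a : F2) v, S v -> S (a *: v) &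
      forall g v, g \in G -> S v -> S (actV g v)].

Definition is_simple_submod (A S : V -> Prop) : Prop :=
  [/\ is_submod A S, (exists2 v, S v & v != 0) &
      forall T, is_submod S T -> (forall v, T v -> v = 0) \/ (forall v, S v -> T v)].

(* socle = sum of all simple submodules = the smallest submodule containing
   every simple submodule *)
Definition socle (A : V -> Prop) : V -> Prop :=
  fun v => forall T, is_submod A T ->
    (forall S, is_simple_submod A S -> forall w, S w -> T w) -> T v.
End Modules.

Definition kG_iso (G : {set GL3}) (V W : lmodType F2)
  (actV : GL3 -> V -> V) (actW : GL3 -> W -> W) (A : V -> Prop) (B : W -> Prop) : Prop :=
  exists f : V -> W,
    [/\ forall u v, A u -> A v -> f (u + v) = f u + f v,
        forall (a : F2) v, A v -> f (a *: v) = a *: f v,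
        forall u v, A u -> A v -> f u = f v -> u = v,
        (forall v, A v -> B (f v)) /\ (forall w, B w -> exists2 v, A v & f v = w) &
        forall g v, g \in G -> A v -> f (actV g v) = actW g (f v)].

(* Write an element of U_3 as [utri r s t]: it fixes x and sends y to y + r x
   and z to z + s x + t y. In characteristic 2 this gives
     utri r s t . phi   = phi + s (1 + r) x^2 + (s + r t) x y + r x z,
     utri r s t . theta = theta + t d2,
   so N is spanned by x^2, x y, x z, phi and K by d2, theta. If a subgroup H
   fixes the generator p of k U_3 . p and a linear form lam satisfies
   lam (u . p) = [u \in H], then v |-> (u H |-> lam (u^-1 . v)) is an
   isomorphism onto k[U_3/H]; evaluation at (1, 0, 1) serves for (phi, H2) and
   evaluation at (0, 1, 1) for (theta, H1). Finally x^2 (resp. d2) is fixed by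
   U_3 and lies in every nonzero submodule of N (resp. K), as one sees by
   applying 1 + b and 1 + c (resp. 1 + d); hence it spans the only simple
   submodule, which is the socle. *)

From HB Require Import structures.
From mathcomp Require Import all_boot all_order all_algebra all_fingroup.
From mathcomp Require Import mpoly ring.
From Stdlib Require Import Classical.
Set Implicit Arguments.
Unset Strict Implicit.
Unset Printing Implicit Defensive.
Import GRing.Theory.
Local Open Scope ring_scope.

Lemma F2_cases (a : F2) : a = 0 \/ a = 1.
Proof. by case: a => [[|[|//]]] i; [left|right]; apply/val_inj. Qed.

Ltac case_F2 :=
  repeat match goal with a : F2 |- _ => case: (F2_cases a) => ->; clear a end.

Lemma F2_mulrr (a : F2) : a * a = a.
Proof. by case_F2; apply/eqP. Qed.

Lemma F2_char2 : 2%:R = 0 :> F2.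
Proof. exact: (pchar_Fp_0 (isT : prime 2)). Qed.

(** * Coordinates on U_3 *)

Lemma ord3_cases (i : 'I_3) : [\/ i = 0, i = 1 | i = 2].
Proof.
by case: i => [[|[|[|//]]] i]; [constructor 1 | constructor 2 | constructor 3]; apply/val_inj.
Qed.

Ltac case_ord3 i := case: (ord3_cases i) => ->.

Definition utri_mx (r s t : F2) : 'M[F2]_3 :=
  \matrix_(i, j) match nat_of_ord i, nat_of_ord j with
                 | 0, 1 => r | 0, 2 => s | 1, 2 => t
                 | i', j' => (i' == j')%:R end.

Lemma utri_mxM r s t r' s' t' :
  utri_mx r s t *m utri_mx r' s' t' = utri_mx (r + r') (s + s' + r * t') (t + t').
Proof.
apply/matrixP => i j; rewrite !mxE !big_ord_recl big_ord0 !mxE.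
by case_ord3 i; case_ord3 j; rewrite /=; ring.
Qed.

Lemma utri_mx_unit r s t : utri_mx r s t \in unitmx.
Proof.
have inv : utri_mx r s t *m utri_mx r (s + r * t) t = 1%:M.
  rewrite utri_mxM; apply/matrixP => i j; rewrite !mxE.
  by case_ord3 i; case_ord3 j; case_F2; apply/eqP.
exact: (mulmx1_unit inv).1.
Qed.

Definition utri r s t : GL3 := FinRing.unit _ (utri_mx_unit r s t).

Lemma utriM r s t r' s' t' :
  (utri r s t * utri r' s' t')%g = utri (r + r') (s + s' + r * t') (t + t').
Proof. exact/val_inj/utri_mxM. Qed.

Lemma utri1 : utri 0 0 0 = 1%g.
Proof. by apply/val_inj/matrixP => i j; rewrite !mxE; case_ord3 i; case_ord3 j; apply/eqP. Qed.

Lemma utri_inj r s t r' s' t' :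
  utri r s t = utri r' s' t' -> [/\ r = r', s = s' & t = t'].
Proof. by move/(congr1 GLval)/matrixP => E; move: (E 0 1) (E 0 2) (E 1 2); rewrite !mxE. Qed.

Lemma utri_U3 r s t : utri r s t \in U3.
Proof.
rewrite inE /upper_unitriangular; apply/andP; split; apply/forallP => i.
  by rewrite mxE; case_ord3 i.
by apply/forallP => j; rewrite mxE; case_ord3 i; case_ord3 j.
Qed.

Lemma U3P g : g \in U3 -> exists r s t, g = utri r s t.
Proof.
rewrite inE => /andP[/forallP diag /forallP low].
exists (GLval g 0 1), (GLval g 0 2), (GLval g 1 2).
apply/val_inj/matrixP => i j; rewrite mxE.
have low' i' j' := implyP (forallP (low i') j').
by case_ord3 i; case_ord3 j; rewrite //= ?(eqP (diag _)) ?(eqP (low' _ _ _)).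
Qed.

Lemma U3_group_set : group_set U3.
Proof.
apply/group_setP; split; first by rewrite -utri1 utri_U3.
by move=> _ _ /U3P[r [s [t ->]]] /U3P[r' [s' [t' ->]]]; rewrite utriM utri_U3.
Qed.
Canonical U3_group := Group U3_group_set.

Lemma bE : b = utri 1 0 0.
Proof. by apply/val_inj/matrixP => i j; rewrite !mxE; case_ord3 i; case_ord3 j; apply/eqP. Qed.
Lemma cE : c = utri 0 1 0.
Proof. by apply/val_inj/matrixP => i j; rewrite !mxE; case_ord3 i; case_ord3 j; apply/eqP. Qed.
Lemma dE : d = utri 0 0 1.
Proof. by apply/val_inj/matrixP => i j; rewrite !mxE; case_ord3 i; case_ord3 j; apply/eqP. Qed.

(** * The action on k[x, y, z] *)

Lemma comp_mpolyA (n k l : nat) (R : comNzRingType) (lq : n.-tuple {mpoly R[k]})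
    (lr : k.-tuple {mpoly R[l]}) (p : {mpoly R[n]}) :
  p \mPo lq \mPo lr = p \mPo [tuple tnth lq i \mPo lr | i < n].
Proof.
rewrite [p \mPo lq]comp_mpolyEX [RHS]comp_mpolyEX raddf_sum; apply: eq_bigr => m _.
rewrite /= comp_mpolyZ !comp_mpolyX rmorph_prod; congr (_ *: _); apply: eq_bigr => i _.
by rewrite rmorphXn tnth_mktuple.
Qed.

Lemma polyactD g : {morph polyact g : u v / u + v}.
Proof. exact: rmorphD. Qed.
Lemma polyactM g : {morph polyact g : u v / u * v}.
Proof. exact: rmorphM. Qed.
Lemma polyactX g n : {morph polyact g : u / u ^+ n}.
Proof. exact: rmorphXn. Qed.
Lemma polyactZ g (a : F2) u : polyact g (a *: u) = a *: polyact g u.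
Proof. exact: comp_mpolyZ. Qed.
Lemma polyact_sum g (I : Type) (r : seq I) (P : pred I) (F : I -> Poly3) :
  polyact g (\sum_(i <- r | P i) F i) = \sum_(i <- r | P i) polyact g (F i).
Proof. exact: raddf_sum. Qed.

Lemma polyactXU g (j : 'I_3) : polyact g 'X_j = \sum_i GLval g i j *: 'X_i.
Proof. by rewrite /polyact comp_mpolyXU -tnth_nth tnth_mktuple. Qed.

Lemma polyact_comp g h p : polyact g (polyact h p) = polyact (g * h)%g p.
Proof.
rewrite /polyact comp_mpolyA; congr (comp_mpoly _ p); apply: eq_from_tnth => j.
rewrite !tnth_mktuple raddf_sum /=.
under eq_bigr => i _ do rewrite comp_mpolyZ comp_mpolyXU -tnth_nth tnth_mktuple scaler_sumr.
rewrite exchange_big; apply: eq_bigr => k _.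
by rewrite mxE scaler_suml; apply: eq_bigr => i _; rewrite scalerA mulrC.
Qed.

Lemma polyact_utri_x r s t : polyact (utri r s t) xx = xx.
Proof. by rewrite /xx polyactXU !big_ord_recl big_ord0 !mxE scale1r !scale0r !addr0. Qed.

Lemma polyact_utri_y r s t : polyact (utri r s t) yy = r *: xx + yy.
Proof. by rewrite /yy polyactXU !big_ord_recl big_ord0 !mxE scale1r !scale0r !addr0. Qed.

Lemma polyact_utri_z r s t : polyact (utri r s t) zz = s *: xx + t *: yy + zz.
Proof. by rewrite /zz polyactXU !big_ord_recl big_ord0 !mxE scale1r addr0 addrA. Qed.

Lemma pchar_Poly3 : 2%N \in [pchar Poly3].
Proof. exact: (rmorph_pchar (@mpolyC 3 F2) (pchar_Fp (isT : prime 2))). Qed.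

Lemma Poly3_char2 : 2%:R = 0 :> Poly3.
Proof. exact: pcharf0 pchar_Poly3. Qed.

Lemma sqrrD_Poly3 (u v : Poly3) : (u + v) ^+ 2 = u ^+ 2 + v ^+ 2.
Proof. by rewrite sqrrD mulr2n addrr_pchar2 ?pchar_Poly3 // addr0. Qed.

Lemma sqrrZ_Poly3 (a : F2) (u : Poly3) : (a *: u) ^+ 2 = a *: u ^+ 2.
Proof. by rewrite exprZn expr2 F2_mulrr. Qed.

Lemma polyact_utri_zsqr r s t :
  polyact (utri r s t) zz ^+ 2 = s *: xx ^+ 2 + t *: yy ^+ 2 + zz ^+ 2.
Proof. by rewrite polyact_utri_z !sqrrD_Poly3 !sqrrZ_Poly3. Qed.

(** * Submodules and socles *)

Section Submodules.
Variables (G : {set GL3}) (V : lmodType F2) (actV : GL3 -> V -> V) (A : V -> Prop).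

Lemma submod_add_act S g v :
  is_submod G actV A S -> g \in G -> S v -> S (v + actV g v).
Proof. by case=> _ _ SD _ Sact gG Sv; apply: SD => //; apply: Sact. Qed.

Hypothesis actZ : forall g a v, actV g (a *: v) = a *: actV g v.
Hypothesis AZ : forall a v, A v -> A (a *: v).
Variable s : V.
Hypotheses (As : A s) (s_neq0 : s != 0) (s_fixed : forall g, g \in G -> actV g s = s).

Definition line : V -> Prop := fun v => exists a : F2, v = a *: s.

Lemma line_id : line s.
Proof. by exists 1; rewrite scale1r. Qed.

Lemma line_submod : is_submod G actV A line.
Proof.
split.
- by move=> _ [a ->]; apply: AZ.
- by exists 0; rewrite scale0r.
- by move=> _ _ [a ->] [a' ->]; exists (a + a'); rewrite scalerDl.
- by move=> a _ [a' ->]; exists (a * a'); rewrite scalerA.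
- by move=> g _ gG [a ->]; exists a; rewrite actZ s_fixed.
Qed.

Lemma line_simple : is_simple_submod G actV A line.
Proof.
split; [exact: line_submod | by exists s; [exact: line_id |] |].
move=> T [TL _ _ TZ _]; have [Ts | nTs] := classic (T s).
  by right=> _ [a ->]; apply: TZ.
left=> v Tv; have [a Dv] := TL v Tv.
by case: (F2_cases a) Dv => -> Dv; [rewrite Dv scale0r | move: Tv; rewrite Dv scale1r].
Qed.

Lemma simple_submod_sub_line S :
  is_simple_submod G actV A S -> S s -> forall v, S v -> line v.
Proof.
move=> [[SA S0 SD SZ Sact] _ S_simple] Ss v Sv.
have lineS_submod : is_submod G actV S (fun u => line u /\ S u).
  split.
  - by move=> u [].
  - by split; [exists 0; rewrite scale0r |].
  - by move=> _ _ [[a ->] Sa] [[a' ->] Sa']; split; [exists (a + a'); rewrite scalerDl | exact: SD].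
  - by move=> a0 _ [[a ->] Sa]; split; [exists (a0 * a); rewrite scalerA | exact: SZ].
  - by move=> g _ gG [[a ->] Sa]; split; [exists a; rewrite actZ s_fixed | exact: Sact].
case: (S_simple _ lineS_submod) => [line0 | /(_ v Sv) []//].
by move: s_neq0; rewrite (line0 s) ?eqxx //; split; [exact: line_id |].
Qed.

Lemma socle_eq_line :
  (forall S, is_submod G actV A S -> (exists2 v, S v & v != 0) -> S s) ->
  forall v, socle G actV A v <-> line v.
Proof.
move=> s_min v; split=> [soc | [a ->] T [_ _ _ TZ _] T_simples].
  apply: (soc line line_submod) => S [S_submod S_neq0 S_simple].
  exact/simple_submod_sub_line/(s_min S S_submod S_neq0).
exact/TZ/(T_simples line line_simple)/line_id.
Qed.

End Submodules.

(** * Cyclic modules as permutation modules *)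

Lemma gen_submod0 p : gen_submod p 0.
Proof. by exists 0; rewrite big1 // => g _; rewrite ffunE scale0r. Qed.

Lemma gen_submodD p u v : gen_submod p u -> gen_submod p v -> gen_submod p (u + v).
Proof.
move=> [cu ->] [cv ->]; exists (cu + cv); rewrite -big_split /=.
by apply: eq_bigr => g _; rewrite ffunE scalerDl.
Qed.

Lemma gen_submodZ p a v : gen_submod p v -> gen_submod p (a *: v).
Proof.
move=> [cv ->]; exists [ffun g => a * cv g]; rewrite scaler_sumr.
by apply: eq_bigr => g _; rewrite ffunE scalerA.
Qed.

Lemma gen_submod_orbit p h : h \in U3 -> gen_submod p (polyact h p).
Proof.
move=> hU; exists [ffun g => (g == h)%:R]; rewrite (bigD1 h) //= big1 ?addr0.
  by rewrite ffunE eqxx scale1r.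
by move=> g /andP[_ /negbTE ngh]; rewrite ffunE ngh scale0r.
Qed.

Lemma repr_lcoset (gT : finGroupType) (H G : {group gT}) C :
  H \subset G -> C \in lcosets H G -> repr C \in G /\ (repr C *: H)%g = C.
Proof.
move=> sHG /imsetP[x xG ->]; rewrite lcosetE.
have /lcosetP[k kH ->] := mem_repr _ (lcoset_refl H x).
split; first by rewrite groupM // (subsetP sHG).
by apply/lcoset_eqP; rewrite mem_lcoset mulKg.
Qed.

(* The finite functions below are locked so that rewriting with their
   evaluation lemmas cannot match other applications of finite functions, such
   as memberships in finite sets. *)
Fact coset_vec_key : unit. Proof. by []. Qed.
Definition coset_vec := locked_with coset_vec_key
  (fun X : {set GL3} => [ffun C => (C == X)%:R] : PermV).

Lemma coset_vecE X C : coset_vec X C = (C == X)%:R.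
Proof. by rewrite [coset_vec]unlock ffunE. Qed.

Lemma pactE g f C : pact g f C = f (g^-1 *: C)%g.
Proof. exact: ffunE. Qed.

Lemma pact_coset_vec g X : pact g (coset_vec X) = coset_vec (g *: X)%g.
Proof.
apply/ffunP => C; rewrite pactE !coset_vecE.
suff -> : (g^-1 *: C == X)%g = (C == g *: X)%g by [].
by apply/eqP/eqP => [<- | ->]; [rewrite lcosetKV | rewrite lcosetK].
Qed.

Lemma pactZ g (a : F2) f : pact g (a *: f) = a *: pact g f.
Proof. by apply/ffunP => C; rewrite [RHS]ffunE !pactE ffunE. Qed.

Lemma pact_sum g (I : Type) (r : seq I) (P : pred I) (F : I -> PermV) :
  pact g (\sum_(i <- r | P i) F i) = \sum_(i <- r | P i) pact g (F i).
Proof. by apply/ffunP => C; rewrite pactE !sum_ffunE; apply: eq_bigr => i _; rewrite pactE. Qed.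

Lemma perm_mod_expand H w :
  perm_mod H w -> w = \sum_(C in lcosets H U3) w C *: coset_vec C.
Proof.
move=> w_supp; apply/ffunP => C; rewrite sum_ffunE.
have [CL | CnL] := boolP (C \in lcosets H U3).
  rewrite (bigD1 C) //= big1 => [|C' /andP[_ /negbTE nC'C]].
    by rewrite ffunE coset_vecE eqxx addr0; apply/esym/mulr1.
  by rewrite ffunE coset_vecE eq_sym nC'C; apply: mulr0.
rewrite w_supp // big1 // => C' C'L; rewrite ffunE coset_vecE.
by case: eqP => [DC | _]; [move: CnL; rewrite DC C'L | apply: mulr0].
Qed.

Section PermutationModule.
Variables (p0 : Poly3) (H : {group GL3}) (lam : Poly3 -> F2).
Hypothesis lamD : {morph lam : u v / u + v}.
Hypothesis lamZ : forall a v, lam (a *: v) = a * lam v.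
Hypothesis sHU3 : H \subset U3.
Hypothesis H_fixes_p0 : forall k, k \in H -> polyact k p0 = p0.
Hypothesis lam_orbit : forall g, g \in U3 -> lam (polyact g p0) = (g \in H)%:R.

Fact to_perm_key : unit. Proof. by []. Qed.
Definition to_perm := locked_with to_perm_key (fun v : Poly3 =>
  [ffun C => if C \in lcosets H U3 then lam (polyact (repr C)^-1 v) : F2^o else 0]).

Lemma to_permE v C :
  to_perm v C = if C \in lcosets H U3 then lam (polyact (repr C)^-1 v) else 0.
Proof. by rewrite [to_perm]unlock ffunE. Qed.

Lemma to_permD : {morph to_perm : u v / u + v}.
Proof.
move=> u v; apply/ffunP => C; rewrite [RHS]ffunE !to_permE.
by case: (C \in _); rewrite ?polyactD ?lamD ?addr0.
Qed.

Lemma to_permZ a v : to_perm (a *: v) = a *: to_perm v.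
Proof.
apply/ffunP => C; rewrite [RHS]ffunE !to_permE.
by case: (C \in _); rewrite ?polyactZ ?lamZ ?scaler0.
Qed.

Lemma to_perm_sum (I : Type) (r : seq I) (P : pred I) (F : I -> Poly3) :
  to_perm (\sum_(i <- r | P i) F i) = \sum_(i <- r | P i) to_perm (F i).
Proof.
have to_perm0 : to_perm 0 = 0 by rewrite -(scale0r 0) to_permZ scale0r.
exact: (big_morph _ to_permD to_perm0).
Qed.

Lemma polyact_p0_lcoset g h : h \in (g *: H)%g -> polyact h p0 = polyact g p0.
Proof. by case/lcosetP => k kH ->; rewrite -polyact_comp H_fixes_p0. Qed.

Lemma to_perm_orbit g : g \in U3 -> to_perm (polyact g p0) = coset_vec (g *: H)%g.
Proof.
move=> gU; apply/ffunP => C; rewrite to_permE coset_vecE.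
have [CL | CnL] := boolP (C \in lcosets H U3); rewrite ?CL ?(negbTE CnL).
  have [rU rH] := repr_lcoset sHU3 CL.
  have rgU : ((repr C)^-1 * g)%g \in U3 by rewrite groupM ?groupV.
  rewrite (polyact_comp (repr C)^-1%g g) (lam_orbit rgU) -mem_lcoset -{2}rH.
  by congr (nat_of_bool _)%:R; apply/idP/eqP => [/lcoset_eqP -> | ->] //; exact: lcoset_refl.
by case: eqP => // DC; move: CnL; rewrite DC -lcosetE imset_f.
Qed.

Lemma to_perm_span (cf : {ffun GL3 -> F2}) :
  to_perm (\sum_(g in U3) cf g *: polyact g p0) = \sum_(g in U3) cf g *: coset_vec (g *: H)%g.
Proof. by rewrite to_perm_sum; apply: eq_bigr => g gU; rewrite to_permZ to_perm_orbit. Qed.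

Lemma to_perm_kernel w : gen_submod p0 w -> to_perm w = 0 -> w = 0.
Proof.
case=> cf ->; rewrite to_perm_span => /ffunP cosets0.
rewrite (partition_big (fun g => g *: H)%g predT) //= big1 // => C _.
have sum_coset0 : \sum_(g in U3 | (g *: H)%g == C) cf g = 0.
  transitivity ((\sum_(g in U3) cf g *: coset_vec (g *: H)%g) C).
    rewrite sum_ffunE big_mkcondr; apply: eq_bigr => g _; rewrite ffunE coset_vecE eq_sym.
    by case: eqP => _; [apply/esym/mulr1 | apply/esym/mulr0].
  by rewrite cosets0 ffunE.
rewrite (eq_bigr (fun g => cf g *: polyact (repr C) p0)) ?sum_coset0.
  by rewrite -scaler_suml sum_coset0 scale0r.
move=> g /andP[_ /eqP <-].
by rewrite (polyact_p0_lcoset (mem_repr _ (lcoset_refl H g))).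
Qed.

Lemma to_perm_onto w : perm_mod H w -> exists2 v, gen_submod p0 v & to_perm v = w.
Proof.
move=> w_supp; exists (\sum_(C in lcosets H U3) w C *: polyact (repr C) p0).
  apply: big_ind => [||C CL]; [exact: gen_submod0 | exact: gen_submodD |].
  by apply/gen_submodZ/gen_submod_orbit; case: (repr_lcoset sHU3 CL).
rewrite to_perm_sum [RHS](perm_mod_expand w_supp); apply: eq_bigr => C CL.
by have [rU rH] := repr_lcoset sHU3 CL; rewrite to_permZ (to_perm_orbit rU) rH.
Qed.

Lemma to_perm_equivariant g v :
  g \in U3 -> gen_submod p0 v -> to_perm (polyact g v) = pact g (to_perm v).
Proof.
move=> gU [cf ->]; rewrite (polyact_sum g) to_perm_span pact_sum to_perm_sum.
apply: eq_bigr => h hU.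
have ghU : (g * h)%g \in U3 by rewrite groupM.
by rewrite polyactZ polyact_comp to_permZ (to_perm_orbit ghU) pactZ pact_coset_vec lcosetM.
Qed.

Lemma gen_submod_perm_iso : kG_iso U3 polyact pact (gen_submod p0) (perm_mod H).
Proof.
exists to_perm; split=> [u v _ _ | a v _ | u v Nu Nv Euv | | g v].
- exact: to_permD.
- exact: to_permZ.
- apply/eqP; rewrite -subr_eq0; apply/eqP/to_perm_kernel.
    by rewrite -scaleN1r; apply/gen_submodD/gen_submodZ.
  by rewrite -scaleN1r to_permD to_permZ Euv scaleN1r subrr.
- by split=> [v _ C CnL | w]; [rewrite to_permE (negbTE CnL) | exact: to_perm_onto].
- exact: to_perm_equivariant.
Qed.

End PermutationModule.

(** * The module N *)

Definition Ncomb (a1 a2 a3 a4 : F2) : Poly3 :=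
  a1 *: xx ^+ 2 + a2 *: (xx * yy) + a3 *: (xx * zz) + a4 *: phi.

Lemma Ncomb_eq a1 a2 a3 a4 a1' a2' a3' a4' :
  a1 = a1' -> a2 = a2' -> a3 = a3' -> a4 = a4' -> Ncomb a1 a2 a3 a4 = Ncomb a1' a2' a3' a4'.
Proof. by move=> -> -> -> ->. Qed.

Lemma Ncomb0 : Ncomb 0 0 0 0 = 0.
Proof. by rewrite /Ncomb !scale0r !addr0. Qed.

Lemma phi_Ncomb : phi = Ncomb 0 0 0 1.
Proof. by rewrite /Ncomb !scale0r !add0r scale1r. Qed.

Lemma NcombD a1 a2 a3 a4 a1' a2' a3' a4' :
  Ncomb a1 a2 a3 a4 + Ncomb a1' a2' a3' a4' = Ncomb (a1 + a1') (a2 + a2') (a3 + a3') (a4 + a4').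
Proof. by rewrite /Ncomb -!mul_mpolyC !rmorphD; ring. Qed.

Lemma NcombZ a a1 a2 a3 a4 :
  a *: Ncomb a1 a2 a3 a4 = Ncomb (a * a1) (a * a2) (a * a3) (a * a4).
Proof. by rewrite /Ncomb -!mul_mpolyC !rmorphM; ring. Qed.

Lemma polyact_utri_phi r s t :
  polyact (utri r s t) phi = Ncomb (s * (1 + r)) (s + r * t) r 1.
Proof.
rewrite /Ncomb /phi polyactD polyactX polyactM polyact_utri_zsqr polyact_utri_y polyact_utri_z.
by rewrite -!mul_mpolyC; ring: Poly3_char2.
Qed.

Lemma polyact_Ncomb r s t a1 a2 a3 a4 :
  polyact (utri r s t) (Ncomb a1 a2 a3 a4) =
  Ncomb (a1 + r * a2 + s * a3 + a4 * (s * (1 + r))) (a2 + t * a3 + a4 * (s + r * t))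
        (a3 + a4 * r) a4.
Proof.
rewrite {1}/Ncomb !polyactD !polyactZ polyactX !polyactM polyact_utri_phi.
rewrite polyact_utri_x polyact_utri_y polyact_utri_z /Ncomb.
by rewrite -!mul_mpolyC !rmorphD !rmorphM; ring.
Qed.

Lemma N_Ncomb v : N v -> exists a1 a2 a3 a4, v = Ncomb a1 a2 a3 a4.
Proof.
case=> cf ->; apply: (big_ind (fun v => exists a1 a2 a3 a4, v = Ncomb a1 a2 a3 a4))
  => [|_ _ [a1 [a2 [a3 [a4 ->]]]] [a1' [a2' [a3' [a4' ->]]]] | g].
- by exists 0, 0, 0, 0; rewrite Ncomb0.
- by rewrite NcombD; do 4 eexists.
- by case/U3P=> r [s [t ->]]; rewrite polyact_utri_phi NcombZ; do 4 eexists.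
Qed.

Lemma utri_expg_d n : (d ^+ n)%g = utri 0 0 n%:R.
Proof.
elim: n => [|n IHn]; first by rewrite expg0 utri1.
by rewrite expgS IHn dE utriM !(add0r, mul0r, addr0) -natr1 addrC.
Qed.

Lemma mem_H2 r s t : (utri r s t \in H2) = (r == 0) && (s == 0).
Proof.
apply/cycleP/andP => [[n /esym] | [/eqP -> /eqP ->]].
  by rewrite utri_expg_d => /utri_inj[-> -> _].
by case: (F2_cases t) => ->; [exists 0%N; rewrite utri1 | exists 1%N; rewrite expg1 dE].
Qed.

(* Its value on [utri r s t . phi] is (1 + r) (1 + s). *)
Definition lamN (v : Poly3) : F2 := v.@[fun i => if i == 1 then 0 else 1].

Lemma lamN_Ncomb a1 a2 a3 a4 : lamN (Ncomb a1 a2 a3 a4) = a1 + a3 + a4.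
Proof.
rewrite /lamN /Ncomb /phi /xx /yy /zz !expr2.
rewrite !(mevalD, mevalZ, mevalM) !mevalXU /=.
by case_F2; apply/eqP.
Qed.

Lemma N_iso : kG_iso U3 polyact pact N (perm_mod H2).
Proof.
apply: (@gen_submod_perm_iso phi H2 lamN) => [u v | a v | | k | g].
- exact: mevalD.
- exact: mevalZ.
- by apply/subsetP => k /cycleP[n ->]; rewrite utri_expg_d utri_U3.
- by case/cycleP=> n ->; rewrite utri_expg_d polyact_utri_phi phi_Ncomb !(mul0r, addr0).
- case/U3P=> r [s [t ->]]; rewrite polyact_utri_phi lamN_Ncomb mem_H2.
  by case_F2; apply/eqP.
Qed.

Lemma d1_sqr_Ncomb : d1 ^+ 2 = Ncomb 1 0 0 0.
Proof. by rewrite /Ncomb !scale0r !addr0 scale1r. Qed.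

Lemma d1_sqr_N : N (d1 ^+ 2).
Proof.
have -> : d1 ^+ 2 = polyact (utri 0 0 0) phi + polyact (utri 1 0 0) phi
                    + (polyact (utri 0 1 0) phi + polyact (utri 1 1 0) phi).
  by rewrite !polyact_utri_phi !NcombD d1_sqr_Ncomb; apply: Ncomb_eq; apply/eqP.
by apply: gen_submodD; apply: gen_submodD; apply: gen_submod_orbit; apply: utri_U3.
Qed.

Lemma Ncomb_add_act_b a1 a2 a3 a4 :
  Ncomb a1 a2 a3 a4 + polyact b (Ncomb a1 a2 a3 a4) = Ncomb a2 0 a4 0.
Proof. by rewrite bE polyact_Ncomb NcombD; apply: Ncomb_eq; ring: F2_char2. Qed.

Lemma Ncomb_add_act_c a1 a2 a3 a4 :
  Ncomb a1 a2 a3 a4 + polyact c (Ncomb a1 a2 a3 a4) = Ncomb (a3 + a4) a4 0 0.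
Proof. by rewrite cE polyact_Ncomb NcombD; apply: Ncomb_eq; ring: F2_char2. Qed.

Lemma N_submod_d1_sqr S :
  is_submod U3 polyact N S -> (exists2 v, S v & v != 0) -> S (d1 ^+ 2).
Proof.
move=> S_submod [v Sv v_neq0]; have [SN _ _ _ _] := S_submod.
have bU3 : b \in U3 by rewrite bE utri_U3.
have cU3 : c \in U3 by rewrite cE utri_U3.
have S_b a1 a2 a3 a4 : S (Ncomb a1 a2 a3 a4) -> S (Ncomb a2 0 a4 0).
  by move/(submod_add_act S_submod bU3); rewrite Ncomb_add_act_b.
have S_c a1 a2 a3 a4 : S (Ncomb a1 a2 a3 a4) -> S (Ncomb (a3 + a4) a4 0 0).
  by move/(submod_add_act S_submod cU3); rewrite Ncomb_add_act_c.
have [a1 [a2 [a3 [a4 Dv]]]] := N_Ncomb (SN v Sv).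
move: Sv v_neq0; rewrite Dv d1_sqr_Ncomb.
case: (F2_cases a4) => -> Sv v_neq0; last by move/S_c/S_b: Sv.
case: (F2_cases a3) Sv v_neq0 => -> Sv v_neq0; last by move/S_c: Sv; rewrite addr0.
case: (F2_cases a2) Sv v_neq0 => -> Sv v_neq0; last by move/S_b: Sv.
by case: (F2_cases a1) Sv v_neq0 => -> Sv; rewrite ?Ncomb0 ?eqxx.
Qed.

Lemma N_socle p : socle U3 polyact N p <-> exists a : F2, p = a *: (d1 ^+ 2).
Proof.
apply: socle_eq_line => [g a v | a v | | | g /U3P[r [s [t ->]]] | ].
- exact: polyactZ.
- exact: gen_submodZ.
- exact: d1_sqr_N.
- by apply/eqP => /(congr1 lamN); rewrite d1_sqr_Ncomb lamN_Ncomb /lamN meval0.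
- by rewrite polyactX polyact_utri_x.
- exact: N_submod_d1_sqr.
Qed.

(** * The module K *)

Definition Kcomb (a1 a2 : F2) : Poly3 := a1 *: d2 + a2 *: theta.

Lemma Kcomb_eq a1 a2 a1' a2' : a1 = a1' -> a2 = a2' -> Kcomb a1 a2 = Kcomb a1' a2'.
Proof. by move=> -> ->. Qed.

Lemma Kcomb0 : Kcomb 0 0 = 0.
Proof. by rewrite /Kcomb !scale0r addr0. Qed.

Lemma KcombD a1 a2 a1' a2' : Kcomb a1 a2 + Kcomb a1' a2' = Kcomb (a1 + a1') (a2 + a2').
Proof. by rewrite /Kcomb -!mul_mpolyC !rmorphD; ring. Qed.

Lemma KcombZ a a1 a2 : a *: Kcomb a1 a2 = Kcomb (a * a1) (a * a2).
Proof. by rewrite /Kcomb -!mul_mpolyC !rmorphM; ring. Qed.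

Lemma d2_Kcomb : d2 = Kcomb 1 0.
Proof. by rewrite /Kcomb scale0r addr0 scale1r. Qed.

Lemma theta_Kcomb : theta = Kcomb 0 1.
Proof. by rewrite /Kcomb scale0r add0r scale1r. Qed.

Lemma polyact_utri_d2 r s t : polyact (utri r s t) d2 = d2.
Proof.
rewrite /d2 polyactD polyactX polyactM polyact_utri_x polyact_utri_y.
rewrite sqrrD_Poly3 sqrrZ_Poly3 -!mul_mpolyC.
ring: Poly3_char2.
Qed.

Lemma polyact_utri_theta r s t : polyact (utri r s t) theta = Kcomb t 1.
Proof.
rewrite /Kcomb /d2 /theta polyactD polyactX polyactM.
rewrite polyact_utri_zsqr polyact_utri_x polyact_utri_z.
by rewrite -!mul_mpolyC; ring: Poly3_char2.
Qed.

Lemma polyact_Kcomb r s t a1 a2 :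
  polyact (utri r s t) (Kcomb a1 a2) = Kcomb (a1 + t * a2) a2.
Proof.
rewrite {1}/Kcomb polyactD !polyactZ polyact_utri_d2 polyact_utri_theta /Kcomb.
by rewrite -!mul_mpolyC !rmorphD !rmorphM; ring.
Qed.

Lemma K_Kcomb v : K v -> exists a1 a2, v = Kcomb a1 a2.
Proof.
case=> cf ->; apply: (big_ind (fun v => exists a1 a2, v = Kcomb a1 a2))
  => [|_ _ [a1 [a2 ->]] [a1' [a2' ->]] | g].
- by exists 0, 0; rewrite Kcomb0.
- by rewrite KcombD; do 2 eexists.
- by case/U3P=> r [s [t ->]]; rewrite polyact_utri_theta KcombZ; do 2 eexists.
Qed.

Lemma H1_U3 : H1 \subset U3.
Proof.
by rewrite gen_subG; apply/subsetP => g /set2P[] ->; rewrite ?bE ?cE utri_U3.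
Qed.

Lemma mem_H1 r s t : (utri r s t \in H1) = (t == 0).
Proof.
pose T0 := [set utri rs.1 rs.2 0 | rs : F2 * F2].
have T0_group : group_set T0.
  apply/group_setP; split; first by rewrite -utri1; apply/imsetP; exists (0, 0).
  move=> _ _ /imsetP[[r1 s1] _ ->] /imsetP[[r2 s2] _ ->].
  by rewrite utriM mulr0 !addr0; apply/imsetP; exists (r1 + r2, s1 + s2).
apply/idP/eqP => [H1rst | ->].
  have sH1T0 : H1 \subset Group T0_group.
    rewrite gen_subG; apply/subsetP => g /set2P[] ->; apply/imsetP.
      by exists (1, 0); rewrite ?bE.
    by exists (0, 1); rewrite ?cE.
  by have /imsetP[[r' s'] _ /utri_inj[]] := subsetP sH1T0 _ H1rst.
have bH1 : b \in H1 by rewrite mem_gen // !inE eqxx.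
have cH1 : c \in H1 by rewrite mem_gen // !inE eqxx orbT.
case: (F2_cases r) => ->; case: (F2_cases s) => ->.
- by rewrite utri1 group1.
- by rewrite -cE.
- by rewrite -bE.
have -> : utri 1 1 0 = (b * c)%g by rewrite bE cE utriM mulr0 !addr0 add0r.
by rewrite groupM.
Qed.

(* Its value on [utri r s t . theta] is 1 + t. *)
Definition lamK (v : Poly3) : F2 := v.@[fun i => if i == 0 then 0 else 1].

Lemma lamK_Kcomb a1 a2 : lamK (Kcomb a1 a2) = a1 + a2.
Proof.
rewrite /lamK /Kcomb /d2 /theta /xx /yy /zz !expr2.
rewrite !(mevalD, mevalZ, mevalM) !mevalXU /=.
by case_F2; apply/eqP.
Qed.

Lemma K_iso : kG_iso U3 polyact pact K (perm_mod H1).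
Proof.
apply: (@gen_submod_perm_iso theta H1 lamK) => [u v | a v | | k kH1 | g].
- exact: mevalD.
- exact: mevalZ.
- exact: H1_U3.
- have /U3P[r [s [t Dk]]] := subsetP H1_U3 k kH1.
  by move: kH1; rewrite Dk mem_H1 => /eqP ->; rewrite polyact_utri_theta theta_Kcomb.
- case/U3P=> r [s [t ->]]; rewrite polyact_utri_theta lamK_Kcomb mem_H1.
  by case_F2; apply/eqP.
Qed.

Lemma d2_K : K d2.
Proof.
have -> : d2 = polyact (utri 0 0 0) theta + polyact (utri 0 0 1) theta.
  by rewrite !polyact_utri_theta KcombD d2_Kcomb; apply: Kcomb_eq; apply/eqP.
by apply: gen_submodD; apply: gen_submod_orbit; apply: utri_U3.
Qed.

Lemma Kcomb_add_act_d a1 a2 : Kcomb a1 a2 + polyact d (Kcomb a1 a2) = Kcomb a2 0.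
Proof. by rewrite dE polyact_Kcomb KcombD; apply: Kcomb_eq; ring: F2_char2. Qed.

Lemma K_submod_d2 S :
  is_submod U3 polyact K S -> (exists2 v, S v & v != 0) -> S d2.
Proof.
move=> S_submod [v Sv v_neq0]; have [SK _ _ _ _] := S_submod.
have dU3 : d \in U3 by rewrite dE utri_U3.
have [a1 [a2 Dv]] := K_Kcomb (SK v Sv).
move: Sv v_neq0; rewrite Dv d2_Kcomb.
case: (F2_cases a2) => -> Sv v_neq0.
  by case: (F2_cases a1) Sv v_neq0 => -> Sv; rewrite ?Kcomb0 ?eqxx.
by move/(submod_add_act S_submod dU3): Sv; rewrite Kcomb_add_act_d.
Qed.

Lemma K_socle p : socle U3 polyact K p <-> exists a : F2, p = a *: d2.
Proof.
apply: socle_eq_line => [g a v | a v | | | g /U3P[r [s [t ->]]] | ].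
- exact: polyactZ.
- exact: gen_submodZ.
- exact: d2_K.
- by apply/eqP => /(congr1 lamK); rewrite d2_Kcomb lamK_Kcomb /lamK meval0.
- exact: polyact_utri_d2.
- exact: K_submod_d2.
Qed.

Theorem lemma4p5 :
  [/\ kG_iso U3 polyact pact N (perm_mod H2),
      (forall p : Poly3, socle U3 polyact N p <-> exists a : F2, p = a *: (d1 ^+ 2)),
      kG_iso U3 polyact pact K (perm_mod H1) &
      (forall p : Poly3, socle U3 polyact K p <-> exists a : F2, p = a *: d2)].
Proof. split; [exact: N_iso | exact: N_socle | exact: K_iso | exact: K_socle]. Qed.
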